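(* Let $\delta,\alpha\geq0$, $\theta\in\left[\frac\alpha2,\alpha\right]$, $\varepsilon\in(0,1)$, and $$\lambda_\pm=\frac{|\xi|^{2\theta}}{2(1+|\xi|^{2\delta})}\left(-1\pm i\sqrt{4|\xi|^{2(\alpha-2\theta)}(1+|\xi|^{2\delta})-1}\right).$$ If $|\xi|<\varepsilon$ then: (i) $|\lambda_+-\lambda_-|\approx|\xi|^\alpha$; (ii) $|\lambda_\pm|^2\lesssim|\xi|^{2\alpha}$; (iii) $|e^{\lambda_\pm t}|\lesssim e^{-\frac14|\xi|^{2\theta}t}$ for $t\geq0$.
   Context: $f\lesssim g$ means $0\leq f\leq Cg$ with $C>0$ independent of $\xi$ and $t$; $g\approx f$ means $g\lesssim f$ and $f\lesssim g$. *)

From Stdlib Require Import Reals.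
From Coquelicot Require Import Coquelicot.
Open Scope R_scope.

Definition Cexp (z : C) : C :=
  (exp (Re z) * cos (Im z), exp (Re z) * sin (Im z)).

(* Common prefactor |xi|^{2 theta} / (2 (1 + |xi|^{2 delta})), with r = |xi| > 0. *)
Definition lam_pref (delta theta r : R) : R :=
  Rpower r (2 * theta) / (2 * (1 + Rpower r (2 * delta))).

Definition lam_sqrt (delta alpha theta r : R) : R :=
  sqrt (4 * Rpower r (2 * (alpha - 2 * theta)) * (1 + Rpower r (2 * delta)) - 1).

Definition lam_plus (delta alpha theta r : R) : C :=
  Cmult (RtoC (lam_pref delta theta r))
        (Cplus (RtoC (-1)) (Cmult Ci (RtoC (lam_sqrt delta alpha theta r)))).

Definition lam_minus (delta alpha theta r : R) : C :=
  Cmult (RtoC (lam_pref delta theta r))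
        (Cminus (RtoC (-1)) (Cmult Ci (RtoC (lam_sqrt delta alpha theta r)))).

(* Write A = r^alpha, B = r^(2 theta), d = r^(2 delta) and lambda_pm = P (-1 pm i S) with
   P = B / (2 (1 + d)).  Since B^2 r^(2 (alpha - 2 theta)) = A^2, the radicand gives
   P^2 (1 + S^2) = A^2 / (1 + d), which is |lambda_pm|^2, while
   |lambda_+ - lambda_-|^2 = 4 P^2 S^2 = 4 A^2 / (1 + d) - 4 P^2.  For r < 1 the
   hypotheses delta >= 0 and 2 theta >= alpha give d <= 1 and B <= A, hence
   A^2 <= |lambda_+ - lambda_-|^2 <= 4 A^2, and Re lambda_pm = - P <= - B / 4.
   All constants equal 1 or 2. *)
From Stdlib Require Import Reals Lra Psatz.
From Coquelicot Require Import Coquelicot.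
Open Scope R_scope.

Lemma exp_le_compat (x y : R) : x <= y -> exp x <= exp y.
Proof.
  intros [Hlt | ->]; [left; exact (exp_increasing _ _ Hlt) | right; reflexivity].
Qed.

Lemma Cmod_Cexp (z : C) : Cmod (Cexp z) = exp (Re z).
Proof.
  unfold Cexp, Cmod; simpl.
  replace (exp (Re z) * cos (Im z) * (exp (Re z) * cos (Im z) * 1)
           + exp (Re z) * sin (Im z) * (exp (Re z) * sin (Im z) * 1))
    with (exp (Re z) ^ 2 * ((sin (Im z))² + (cos (Im z))²)) by (unfold Rsqr; ring).
  rewrite sin2_cos2, Rmult_1_r.
  apply sqrt_pow2, Rlt_le, exp_pos.
Qed.

Lemma Rpower_sqr (x a : R) : Rpower x a ^ 2 = Rpower x (2 * a).
Proof.
  unfold Rpower; simpl; rewrite Rmult_1_r, <- exp_plus.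
  f_equal; ring.
Qed.

Lemma Rle_Rpower_lt1 (e n m : R) : 0 < e < 1 -> n <= m -> Rpower e m <= Rpower e n.
Proof.
  intros He Hnm.
  assert (Hinv : forall x, Rpower e x = Rpower (/ e) (- x)).
  { intros x; unfold Rpower; rewrite ln_Rinv by lra; f_equal; ring. }
  rewrite !Hinv; apply Rle_Rpower; [| lra].
  rewrite <- Rinv_1; apply Rinv_le_contravar; lra.
Qed.

Lemma Rdiv_1_plus_bounds (x d : R) : 0 <= x -> 0 <= d <= 1 -> x / 2 <= x / (1 + d) <= x.
Proof.
  intros Hx Hd; unfold Rdiv; split.
  - apply Rmult_le_compat_l; [lra |]; apply Rinv_le_contravar; lra.
  - rewrite <- (Rmult_1_r x) at 2; apply Rmult_le_compat_l; [lra |].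
    rewrite <- Rinv_1; apply Rinv_le_contravar; lra.
Qed.

Lemma lam_plus_eq (delta alpha theta r : R) :
  lam_plus delta alpha theta r
  = (- lam_pref delta theta r, lam_pref delta theta r * lam_sqrt delta alpha theta r).
Proof. unfold lam_plus; apply injective_projections; simpl; ring. Qed.

Lemma lam_minus_eq (delta alpha theta r : R) :
  lam_minus delta alpha theta r
  = (- lam_pref delta theta r, - (lam_pref delta theta r * lam_sqrt delta alpha theta r)).
Proof. unfold lam_minus; apply injective_projections; simpl; ring. Qed.

Lemma lam_diff_eq (delta alpha theta r : R) :
  Cminus (lam_plus delta alpha theta r) (lam_minus delta alpha theta r)
  = (0, 2 * (lam_pref delta theta r * lam_sqrt delta alpha theta r)).
Proof.
  rewrite lam_plus_eq, lam_minus_eq; apply injective_projections; simpl; ring.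
Qed.

Section Eigenvalues.

Variables delta alpha theta r : R.
Hypothesis Hr : 0 < r < 1.
Hypothesis Hdelta : 0 <= delta.
Hypothesis Htheta : alpha <= 2 * theta.

Lemma Rpower_delta_bounds : 0 < Rpower r (2 * delta) <= 1.
Proof.
  split; [apply exp_pos |].
  rewrite <- (Rpower_O r) by lra; apply Rle_Rpower_lt1; lra.
Qed.

Lemma lam_pref_bounds :
  Rpower r (2 * theta) / 4 <= lam_pref delta theta r <= Rpower r (2 * theta) / 2.
Proof.
  pose proof Rpower_delta_bounds as Hd.
  assert (HB : 0 < Rpower r (2 * theta)) by apply exp_pos.
  unfold lam_pref; split.
  - apply Rmult_le_compat_l; [lra |]; apply Rinv_le_contravar; lra.
  - apply Rmult_le_compat_l; [lra |]; apply Rinv_le_contravar; lra.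
Qed.

Lemma lam_sqrt_sqr :
  lam_sqrt delta alpha theta r ^ 2
  = 4 * Rpower r (2 * (alpha - 2 * theta)) * (1 + Rpower r (2 * delta)) - 1.
Proof.
  pose proof Rpower_delta_bounds as Hd.
  assert (HE : 1 <= Rpower r (2 * (alpha - 2 * theta))).
  { rewrite <- (Rpower_O r) by lra; apply Rle_Rpower_lt1; lra. }
  apply pow2_sqrt; nra.
Qed.

Lemma lam_pref_sqr_mul :
  lam_pref delta theta r ^ 2 * (1 + lam_sqrt delta alpha theta r ^ 2)
  = Rpower r (2 * alpha) / (1 + Rpower r (2 * delta)).
Proof.
  pose proof Rpower_delta_bounds as Hd.
  assert (HBE : Rpower r (2 * theta) ^ 2 * Rpower r (2 * (alpha - 2 * theta))
                = Rpower r (2 * alpha)).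
  { rewrite Rpower_sqr, <- Rpower_plus; f_equal; ring. }
  rewrite lam_sqrt_sqr, <- HBE; unfold lam_pref; field; lra.
Qed.

Lemma Cmod_lam_plus_sqr :
  Cmod (lam_plus delta alpha theta r) ^ 2
  = Rpower r (2 * alpha) / (1 + Rpower r (2 * delta)).
Proof. rewrite Cmod2_alt, lam_plus_eq, <- lam_pref_sqr_mul; simpl; ring. Qed.

Lemma Cmod_lam_minus_sqr :
  Cmod (lam_minus delta alpha theta r) ^ 2
  = Rpower r (2 * alpha) / (1 + Rpower r (2 * delta)).
Proof. rewrite Cmod2_alt, lam_minus_eq, <- lam_pref_sqr_mul; simpl; ring. Qed.

Lemma Cmod_lam_sqr_le :
  Cmod (lam_plus delta alpha theta r) ^ 2 <= Rpower r (2 * alpha) /\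
  Cmod (lam_minus delta alpha theta r) ^ 2 <= Rpower r (2 * alpha).
Proof.
  pose proof Rpower_delta_bounds as Hd.
  assert (Hdiv : Rpower r (2 * alpha) / (1 + Rpower r (2 * delta)) <= Rpower r (2 * alpha))
    by (apply Rdiv_1_plus_bounds; [apply Rlt_le, exp_pos | lra]).
  rewrite Cmod_lam_plus_sqr, Cmod_lam_minus_sqr; split; exact Hdiv.
Qed.

Lemma Cmod_lam_diff_sqr :
  Cmod (Cminus (lam_plus delta alpha theta r) (lam_minus delta alpha theta r)) ^ 2
  = 4 * (Rpower r (2 * alpha) / (1 + Rpower r (2 * delta)))
    - 4 * lam_pref delta theta r ^ 2.
Proof. rewrite Cmod2_alt, lam_diff_eq, <- lam_pref_sqr_mul; simpl; ring. Qed.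

Lemma Cmod_lam_diff_bounds :
  Rpower r alpha
    <= Cmod (Cminus (lam_plus delta alpha theta r) (lam_minus delta alpha theta r))
    <= 2 * Rpower r alpha.
Proof.
  pose proof Rpower_delta_bounds as Hd.
  pose proof lam_pref_bounds as HP.
  pose proof Cmod_lam_diff_sqr as Hdiff.
  set (M := Cmod _) in Hdiff |- *.
  assert (HM : 0 <= M) by apply Cmod_ge_0.
  assert (HA : 0 < Rpower r alpha) by apply exp_pos.
  assert (HBA : Rpower r (2 * theta) <= Rpower r alpha) by (apply Rle_Rpower_lt1; lra).
  set (q := Rpower r (2 * alpha) / (1 + Rpower r (2 * delta))) in Hdiff.
  assert (Hq : Rpower r alpha ^ 2 / 2 <= q <= Rpower r alpha ^ 2)
    by (rewrite Rpower_sqr; apply Rdiv_1_plus_bounds; [apply Rlt_le, exp_pos | lra]).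
  split; nra.
Qed.

Lemma Cmod_Cexp_lam_le (t : R) : 0 <= t ->
  Cmod (Cexp (Cmult (lam_plus delta alpha theta r) (RtoC t)))
    <= exp (- (1/4) * Rpower r (2 * theta) * t) /\
  Cmod (Cexp (Cmult (lam_minus delta alpha theta r) (RtoC t)))
    <= exp (- (1/4) * Rpower r (2 * theta) * t).
Proof.
  intros Ht.
  pose proof lam_pref_bounds as HP.
  rewrite !Cmod_Cexp, lam_plus_eq, lam_minus_eq; simpl.
  split; apply exp_le_compat; nra.
Qed.

End Eigenvalues.

Theorem lemma2p5 (delta alpha theta eps : R) :
  0 <= delta -> 0 <= alpha -> alpha / 2 <= theta <= alpha -> 0 < eps < 1 ->
  (* (i) |lambda_+ - lambda_-| ≈ |xi|^alpha *)
  (exists c Cst : R, 0 < c /\ 0 < Cst /\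
     forall r : R, 0 < r < eps ->
       c * Rpower r alpha <= Cmod (Cminus (lam_plus delta alpha theta r)
                                          (lam_minus delta alpha theta r))
       /\ Cmod (Cminus (lam_plus delta alpha theta r)
                       (lam_minus delta alpha theta r)) <= Cst * Rpower r alpha) /\
  (* (ii) |lambda_±|^2 ≲ |xi|^{2 alpha} *)
  (exists Cst : R, 0 < Cst /\
     forall r : R, 0 < r < eps ->
       (Cmod (lam_plus delta alpha theta r)) ^ 2 <= Cst * Rpower r (2 * alpha) /\
       (Cmod (lam_minus delta alpha theta r)) ^ 2 <= Cst * Rpower r (2 * alpha)) /\
  (* (iii) |e^{lambda_± t}| ≲ e^{-|xi|^{2 theta} t / 4}, t >= 0 *)
  (exists Cst : R, 0 < Cst /\
     forall r t : R, 0 < r < eps -> 0 <= t ->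
       Cmod (Cexp (Cmult (lam_plus delta alpha theta r) (RtoC t)))
         <= Cst * exp (- (1/4) * Rpower r (2 * theta) * t) /\
       Cmod (Cexp (Cmult (lam_minus delta alpha theta r) (RtoC t)))
         <= Cst * exp (- (1/4) * Rpower r (2 * theta) * t)).
Proof.
  intros Hdelta _ Htheta Heps.
  assert (Hr : forall r, 0 < r < eps -> 0 < r < 1) by (intros; lra).
  assert (Htheta2 : alpha <= 2 * theta) by lra.
  split; [| split].
  - exists 1, 2; split; [lra | split; [lra |]]; intros r Hr_eps.
    rewrite Rmult_1_l; apply Cmod_lam_diff_bounds; auto.
  - exists 1; split; [lra |]; intros r Hr_eps.
    rewrite !Rmult_1_l; apply Cmod_lam_sqr_le; auto.
  - exists 1; split; [lra |]; intros r t Hr_eps Ht.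
    rewrite !Rmult_1_l; apply Cmod_Cexp_lam_le; auto.
Qed.
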